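(* Let $A,B,C,D,E$ be compact convex sets in the plane forming a holey family, such that $D\in conv(ABC)$ and $E\in conv(ABD)$. Then $D\cap E\subset \mathrm{hollow}(ABC)$.
   Context: A family of compact convex sets in the plane is holey if any two members intersect and no three distinct members have a common point. For three pairwise intersecting compact convex sets $X,Y,Z$ with no common point, $o(XYZ)=o(xyz)$ for any $x\in Y\cap Z$, $y\in X\cap Z$, $z\in X\cap Y$, where $o(xyz)=+1$ for a counterclockwise and $-1$ for a clockwise triangle (independent of the choice); and $\mathbb{R}^2\setminus(X\cup Y\cup Z)$ has exactly one bounded connected component, denoted $\mathrm{hollow}(XYZ)$. We write $O\in conv(XYZ)$ if $o(XYO)=o(YZO)=o(ZXO)=1$ or all three equal $-1$. *)

From HB Require Import structures.
From mathcomp Require Import all_boot all_order all_algebra.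
From mathcomp Require Import all_classical all_reals all_analysis.
Set Implicit Arguments. Unset Strict Implicit. Unset Printing Implicit Defensive.
Import Order.TTheory GRing.Theory Num.Theory.
Import numFieldNormedType.Exports.
Local Open Scope classical_set_scope.
Local Open Scope ring_scope.

Section Plane.
Variable R : realType.
Definition plane := (R * R)%type.

Definition pconvex (S : set plane) : Prop :=
  forall x y : plane, S x -> S y -> forall t : R, 0 <= t -> t <= 1 ->
    S ((1 - t) * x.1 + t * y.1, (1 - t) * x.2 + t * y.2).

Definition cconvex (S : set plane) : Prop := compact S /\ pconvex S.

Definition holey (I : Type) (F : I -> set plane) : Prop :=
  (forall i j : I, F i `&` F j !=set0) /\
  (forall i j k : I, i <> j -> j <> k -> i <> k -> F i `&` F j `&` F k = set0).

(* twice the signed area of the triangle xyz: > 0 iff counterclockwise *)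
Definition det3 (x y z : plane) : R :=
  (y.1 - x.1) * (z.2 - x.2) - (y.2 - x.2) * (z.1 - x.1).

(* o(XYZ) = +1, resp. -1 : o(xyz) for x in Y∩Z, y in X∩Z, z in X∩Y
   (the value does not depend on the choice, see context) *)
Definition orient_pos (X Y Z : set plane) : Prop :=
  exists x y z : plane, (Y `&` Z) x /\ (X `&` Z) y /\ (X `&` Y) z /\ 0 < det3 x y z.
Definition orient_neg (X Y Z : set plane) : Prop :=
  exists x y z : plane, (Y `&` Z) x /\ (X `&` Z) y /\ (X `&` Y) z /\ det3 x y z < 0.

(* O ∈ conv(XYZ) *)
Definition in_conv (O X Y Z : set plane) : Prop :=
  (orient_pos X Y O /\ orient_pos Y Z O /\ orient_pos Z X O) \/
  (orient_neg X Y O /\ orient_neg Y Z O /\ orient_neg Z X O).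

Definition pbounded (S : set plane) : Prop :=
  exists M : R, forall p : plane, S p -> `|p.1| <= M /\ `|p.2| <= M.

(* hollow(XYZ): the (unique) bounded connected component of R^2 \ (X ∪ Y ∪ Z);
   p lies in it iff p is in the complement and its component there is bounded *)
Definition hollow (X Y Z : set plane) : set plane :=
  [set p | (~` (X `|` Y `|` Z)) p /\
           pbounded (connected_component (~` (X `|` Y `|` Z)) p)].
End Plane.

From mathcomp Require Import all_boot all_order all_algebra.
From mathcomp Require Import all_classical all_reals all_analysis.
From mathcomp.algebra_tactics Require Import ring lra.
Set Implicit Arguments. Unset Strict Implicit. Unset Printing Implicit Defensive.
Import Order.TTheory GRing.Theory Num.Theory.
Import numFieldNormedType.Exports.
Local Open Scope classical_set_scope.
Local Open Scope ring_scope.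

Section Segments.
Variable R : realType.
Implicit Types (s t : R) (p q r u v w x y z : plane R) (S : set (plane R)).

Definition comb t x y : plane R := ((1 - t) * x.1 + t * y.1, (1 - t) * x.2 + t * y.2).

Definition segment x y : set (plane R) := [set comb t x y | t in `[0, 1]].

Lemma plane_ext x y : x.1 = y.1 -> x.2 = y.2 -> x = y.
Proof. by case: x => ? ?; case: y => ? ? /= -> ->. Qed.

Lemma comb0 x y : comb 0 x y = x.
Proof. by apply: plane_ext; rewrite /= subr0 mul1r mul0r addr0. Qed.

Lemma comb1 x y : comb 1 x y = y.
Proof. by apply: plane_ext; rewrite /= subrr mul0r mul1r add0r. Qed.

Lemma segmentP x y q : segment x y q <-> exists2 t, 0 <= t <= 1 & q = comb t x y.
Proof.
by split => -[t t01 eq_q]; exists t => //; rewrite /= in_itv in t01 *.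
Qed.

Lemma segment_l x y : segment x y x.
Proof. by apply/segmentP; exists 0; rewrite ?comb0 // lexx ler01. Qed.

Lemma segment_r x y : segment x y y.
Proof. by apply/segmentP; exists 1; rewrite ?comb1 // lexx ler01. Qed.

Lemma segment_sub S x y : pconvex S -> S x -> S y -> segment x y `<=` S.
Proof. by move=> cS Sx Sy q /segmentP [t /andP[t0 t1] ->]; exact: cS. Qed.

Lemma pconvexI S S' : pconvex S -> pconvex S' -> pconvex (S `&` S').
Proof. by move=> cS cS' x y [? ?] [? ?] t t0 t1; split; [apply: cS | apply: cS']. Qed.

Lemma comb_continuous x y : continuous (fun t => comb t x y).
Proof.
move=> t.
have comb_cvg (a b : R) : (fun s => (1 - s) * a + s * b) @ t --> (1 - t) * a + t * b.
  by apply: cvgD; apply: cvgM; try apply: cvgB; by [exact: cvg_cst | exact: cvg_id].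
exact: (cvg_pair (comb_cvg x.1 y.1) (comb_cvg x.2 y.2)).
Qed.

Lemma connected_segment x y : connected (segment x y).
Proof.
apply: connected_continuous_connected; first exact: segment_connected.
exact/continuous_subspaceT/comb_continuous.
Qed.

Lemma pconvex_connected S : pconvex S -> connected S.
Proof.
move=> cS; have [->|/set0P [x Sx]] := eqVneq S set0; first exact: connected0.
have -> : S = \bigcup_(y in S) segment x y.
  apply/seteqP; split => [y Sy | y [z Sz]]; first by exists y => //; exact: segment_r.
  exact: segment_sub.
apply: bigcup_connected; first by exists x => y _; exact: segment_l.
by move=> y _; exact: connected_segment.
Qed.

Lemma det3_cycle x y z : det3 x y z = det3 y z x.
Proof. rewrite /det3; ring. Qed.

Lemma det3_swap x y z : det3 x z y = - det3 x y z.
Proof. rewrite /det3; ring. Qed.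

Lemma det3_combl t x x' y z : det3 (comb t x x') y z = (1 - t) * det3 x y z + t * det3 x' y z.
Proof. rewrite /det3 /=; ring. Qed.

Lemma det3_combr t x y z z' : det3 x y (comb t z z') = (1 - t) * det3 x y z + t * det3 x y z'.
Proof. rewrite /det3 /=; ring. Qed.

Lemma det3_sum q x y z : det3 q x y + det3 q y z + det3 q z x = det3 x y z.
Proof. rewrite /det3; ring. Qed.

Lemma det3_barycentric q x y z :
  det3 x y z * q.1 = det3 q y z * x.1 + det3 q z x * y.1 + det3 q x y * z.1 /\
  det3 x y z * q.2 = det3 q y z * x.2 + det3 q z x * y.2 + det3 q x y * z.2.
Proof. by split; rewrite /det3; ring. Qed.

Lemma det3_segment q x y : segment x y q -> det3 q x y = 0.
Proof. by move=> /segmentP [t _ ->]; rewrite /det3 /=; ring. Qed.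

Lemma det3_eq0_line x y z : det3 x y z = 0 ->
  x = y \/ exists l, z.1 = x.1 + l * (y.1 - x.1) /\ z.2 = x.2 + l * (y.2 - x.2).
Proof.
rewrite /det3 => h.
have [e1|e1] := eqVneq (y.1 - x.1) 0.
  have [e2|e2] := eqVneq (y.2 - x.2) 0; first by left; apply: plane_ext; lra.
  right; exists ((z.2 - x.2) / (y.2 - x.2)); rewrite e1 mulr0 divfK //.
  suff : z.1 - x.1 = 0 by split; lra.
  by apply: (mulfI e2); rewrite mulr0; move: h; rewrite e1; lra.
right; exists ((z.1 - x.1) / (y.1 - x.1)); rewrite divfK //.
suff : z.2 - x.2 = (z.1 - x.1) / (y.1 - x.1) * (y.2 - x.2) by split; lra.
by rewrite mulrAC -[LHS](mulfK e1); congr (_ / _); lra.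
Qed.

Lemma det3_eq0_segment x y z : det3 x y z = 0 ->
  [\/ segment y z x, segment x z y | segment x y z].
Proof.
move=> /det3_eq0_line [<-|[l [h1 h2]]]; first by constructor 2; exact: segment_l.
have [l0|l0] := lerP l 0.
  constructor 1; apply/segmentP; exists (1 / (1 - l)).
    by rewrite divr_ge0 ?ler_pdivrMr /=; lra.
  by apply: plane_ext; rewrite /= ?h1 ?h2; field; lra.
have [l1|l1] := lerP l 1.
  by constructor 3; apply/segmentP; exists l; [lra | apply: plane_ext; rewrite /= ?h1 ?h2; ring].
constructor 2; apply/segmentP; exists (1 / l).
  by rewrite divr_ge0 ?ler_pdivrMr /=; lra.
by apply: plane_ext; rewrite /= ?h1 ?h2; field; lra.
Qed.

End Segments.

Section Corners.
Variable R : realType.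
Implicit Types (s t : R) (r x y z : plane R) (X Y Z O : set (plane R)).

Definition corners X Y Z x y z := [/\ (Y `&` Z) x, (X `&` Z) y & (X `&` Y) z].

Definition oriented X Y Z s := forall x y z, corners X Y Z x y z -> 0 < s * det3 x y z.

Lemma meet3_emptyP X Y Z r : X `&` Y `&` Z = set0 -> X r -> Y r -> Z r -> False.
Proof. by move=> XYZ Xr Yr Zr; rewrite -[False]/(set0 r) -XYZ. Qed.

Lemma meet3_empty_cycle X Y Z : X `&` Y `&` Z = set0 -> Y `&` Z `&` X = set0.
Proof. by move=> XYZ; rewrite setIC setIA. Qed.

Lemma corners_cycle X Y Z x y z : corners X Y Z x y z -> corners Y Z X y z x.
Proof. by case=> Yx [Xy Zy] [Xz Yz]; split; rewrite // setIC. Qed.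

Lemma affine_root (a b : R) : a * b <= 0 -> a != 0 ->
  exists2 t, 0 <= t <= 1 & (1 - t) * a + t * b = 0.
Proof.
move=> ab a0; have ab0 : a - b != 0 by apply: contra a0 => /eqP ba; nra.
have ab2 : 0 < (a - b) ^+ 2 by rewrite exprn_even_gt0.
exists (a * (a - b) / (a - b) ^+ 2); last by field.
by rewrite divr_ge0 ?sqr_ge0 ?ler_pdivrMr //=; nra.
Qed.

Lemma mulr_gt0_trans (a b c : R) : 0 < a * b -> 0 < b * c -> 0 < a * c.
Proof.
move=> ab bc; have b0 : b != 0 by apply: contraTneq ab => ->; rewrite mulr0 ltxx.
have : 0 < (a * c) * (b * b) by rewrite mulrACA (mulrC c) mulr_gt0.
by rewrite pmulr_lgt0 // -expr2 exprn_even_gt0.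
Qed.

Lemma corners_det3_neq0 X Y Z x y z :
  pconvex X -> pconvex Y -> pconvex Z -> X `&` Y `&` Z = set0 ->
  corners X Y Z x y z -> det3 x y z != 0.
Proof.
move=> cX cY cZ /meet3_emptyP XYZ [[Yx Zx] [Xy Zy] [Xz Yz]].
apply/eqP => /det3_eq0_segment [xyz|yxz|zxy].
- exact: XYZ x (segment_sub cX Xy Xz xyz) Yx Zx.
- exact: XYZ y Xy (segment_sub cY Yx Yz yxz) Zy.
- exact: XYZ z Xz Yz (segment_sub cZ Zx Zy zxy).
Qed.

Lemma det3_corners_movel X Y Z x x' y z :
  pconvex X -> pconvex Y -> pconvex Z -> X `&` Y `&` Z = set0 ->
  corners X Y Z x y z -> (Y `&` Z) x' -> 0 < det3 x y z * det3 x' y z.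
Proof.
move=> cX cY cZ XYZ cxyz YZx'; have [YZx Xy Xz] := cxyz.
have neq0 := corners_det3_neq0 cX cY cZ XYZ.
rewrite lt_def mulf_neq0 ?neq0 //= leNgt; apply/negP => /ltW.
move=> /affine_root /(_ (neq0 _ _ _ cxyz)) [t /andP[t0 t1] det0].
have : corners X Y Z (comb t x x') y z by split => //; apply: pconvexI.
by move/neq0; rewrite det3_combl det0 eqxx.
Qed.

Lemma det3_corners_sign X Y Z x y z x' y' z' :
  pconvex X -> pconvex Y -> pconvex Z -> X `&` Y `&` Z = set0 ->
  corners X Y Z x y z -> corners X Y Z x' y' z' -> 0 < det3 x y z * det3 x' y' z'.
Proof.
move=> cX cY cZ XYZ cxyz cxyz'.
have YZX := meet3_empty_cycle XYZ; have ZXY := meet3_empty_cycle YZX.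
have [YZx' _ _] := cxyz'; have [ZXy' _ _] := corners_cycle cxyz'.
have [XYz' _ _] := corners_cycle (corners_cycle cxyz').
have [_ XZy XYz] := cxyz.
have h1 := det3_corners_movel cX cY cZ XYZ cxyz YZx'.
have h2 := det3_corners_movel cY cZ cX YZX (corners_cycle (And3 YZx' XZy XYz)) ZXy'.
have [_ XZy' _] := cxyz'.
have h3 := det3_corners_movel cZ cX cY ZXY
  (corners_cycle (corners_cycle (And3 YZx' XZy' XYz))) XYz'.
rewrite -(det3_cycle x' y z) -(det3_cycle x' y' z) in h2.
rewrite (det3_cycle z x' y') (det3_cycle z' x' y') in h3.
exact: mulr_gt0_trans (mulr_gt0_trans h1 h2) h3.
Qed.

Lemma oriented_pos X Y Z : pconvex X -> pconvex Y -> pconvex Z -> X `&` Y `&` Z = set0 ->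
  orient_pos X Y Z -> oriented X Y Z 1.
Proof.
move=> cX cY cZ XYZ [x [y [z [YZx [XZy [XYz pos]]]]]] x' y' z' cxyz'.
have := det3_corners_sign cX cY cZ XYZ (And3 YZx XZy XYz) cxyz'.
by rewrite mul1r pmulr_rgt0.
Qed.

Lemma oriented_neg X Y Z : pconvex X -> pconvex Y -> pconvex Z -> X `&` Y `&` Z = set0 ->
  orient_neg X Y Z -> oriented X Y Z (-1).
Proof.
move=> cX cY cZ XYZ [x [y [z [YZx [XZy [XYz neg]]]]]] x' y' z' cxyz'.
have := det3_corners_sign cX cY cZ XYZ (And3 YZx XZy XYz) cxyz'.
by rewrite mulN1r oppr_gt0 nmulr_rgt0.
Qed.

Lemma in_conv_oriented O X Y Z :
  pconvex O -> pconvex X -> pconvex Y -> pconvex Z ->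
  X `&` Y `&` O = set0 -> Y `&` Z `&` O = set0 -> Z `&` X `&` O = set0 ->
  in_conv O X Y Z ->
  exists2 s, s = 1 \/ s = -1 & [/\ oriented X Y O s, oriented Y Z O s & oriented Z X O s].
Proof.
move=> cO cX cY cZ XYO YZO ZXO [[h1 [h2 h3]]|[h1 [h2 h3]]].
  by exists 1; [left | split; apply: oriented_pos].
by exists (-1); [right | split; apply: oriented_neg].
Qed.

End Corners.

Section Winding.
Variable R : realType.
Implicit Types (a b c s t : R) (d q u v w x y z : plane R) (S : set (plane R)).

Definition side q d x := d.1 * (x.2 - q.2) - d.2 * (x.1 - q.1).

(* For [u] and [v] off the line through [q] of direction [d], [crossing q d u v]
   counts the crossings of the segment [uv] with the ray from [q] towards [d],
   with a sign given by the direction of the crossing. *)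
Definition crossingf a b c : R :=
  if (a < 0) && (0 < b) && (0 < c) then 1
  else if (b < 0) && (0 < a) && (c < 0) then -1 else 0.

Definition crossing q d u v := crossingf (side q d u) (side q d v) (det3 q u v).

Definition common_sign a b c : R :=
  if (0 < a) && (0 < b) && (0 < c) then 1
  else if (a < 0) && (b < 0) && (c < 0) then -1 else 0.

Definition wind q u v w := common_sign (det3 q u v) (det3 q v w) (det3 q w u).

Ltac rewrite_sign_tests := repeat match goal with
 | H : is_true (?x < ?y) |- context[?x < ?y] => rewrite H
 | H : is_true (?x < ?y) |- context[?y < ?x] => rewrite (lt_gtF H)
 end; rewrite ?ltxx /=.

Lemma crossingf_anti a b c : crossingf b a (- c) = - crossingf a b c.
Proof.
rewrite /crossingf oppr_gt0 oppr_lt0.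
have [h|h|h] := ltgtP a 0; have [k|k|k] := ltgtP b 0; have [l|l|l] := ltgtP c 0;
  rewrite ?h ?k ?l; rewrite_sign_tests; rewrite ?oppr0 ?opprK //.
Qed.

Lemma crossing_anti q d u v : crossing q d v u = - crossing q d u v.
Proof. by rewrite /crossing det3_swap crossingf_anti. Qed.

Lemma crossingf_triangle (a b c d1 d2 d3 : R) : a != 0 -> b != 0 -> c != 0 ->
  (d1 = 0 -> 0 < a * b) -> (d2 = 0 -> 0 < b * c) -> (d3 = 0 -> 0 < c * a) ->
  d2 * a + d3 * b + d1 * c = 0 ->
  crossingf a b d1 + crossingf b c d2 + crossingf c a d3 = common_sign d1 d2 d3.
Proof.
move=> a0 b0 c0 e1 e2 e3 e; rewrite /crossingf /common_sign.
have [h|h|h] := ltgtP a 0; last by rewrite h eqxx in a0.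
all: have [k|k|k] := ltgtP b 0; last by rewrite k eqxx in b0.
all: have [l|l|l] := ltgtP c 0; last by rewrite l eqxx in c0.
all: have [m1|m1|m1] := ltgtP d1 0; [| | move: e1 e; rewrite m1 => /(_ erefl) e1 e].
all: have [m2|m2|m2] := ltgtP d2 0; [| | move: e2 e; rewrite m2 => /(_ erefl) e2 e].
all: have [m3|m3|m3] := ltgtP d3 0; [| | move: e3 e; rewrite m3 => /(_ erefl) e3 e].
all: rewrite_sign_tests.
all: try lra.
all: nra.
Qed.

Lemma crossing_triangle q d u v w :
  side q d u != 0 -> side q d v != 0 -> side q d w != 0 ->
  (det3 q u v = 0 -> 0 < side q d u * side q d v) ->
  (det3 q v w = 0 -> 0 < side q d v * side q d w) ->
  (det3 q w u = 0 -> 0 < side q d w * side q d u) ->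
  crossing q d u v + crossing q d v w + crossing q d w u = wind q u v w.
Proof.
move=> u0 v0 w0 e1 e2 e3; apply: crossingf_triangle => //.
by rewrite /det3 /side; ring.
Qed.

End Winding.

Section WindingFacts.
Variable R : realType.
Implicit Types (s t : R) (d q u v w x y z : plane R) (S X Y Z : set (plane R)).

Lemma segmentC u v : segment u v = segment v u.
Proof.
suff sub (a b : plane R) : segment a b `<=` segment b a by apply/seteqP; split; apply: sub.
move=> q /segmentP [t t01 ->]; apply/segmentP; exists (1 - t); first lra.
by apply: plane_ext; rewrite /=; ring.
Qed.

Lemma side_comb q d t u v : side q d (comb t u v) = (1 - t) * side q d u + t * side q d v.
Proof. by rewrite /side /=; ring. Qed.

Lemma side_mul_gt0 q d u v : side q d u != 0 -> side q d v != 0 -> ~ segment u v q ->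
  det3 q u v = 0 -> 0 < side q d u * side q d v.
Proof.
move=> u0 v0 quv uv0; rewrite lt_def mulf_neq0 //= leNgt; apply/negP => /ltW.
move=> /affine_root /(_ u0) [t t01 side0]; apply: quv; apply/segmentP; exists t => //.
have {}side0 : side q d (comb t u v) = 0 by rewrite side_comb.
have det0 : det3 q u (comb t u v) = 0 by rewrite det3_combr uv0 /det3; ring.
move: side0 det0 u0; rewrite /side /det3.
set w1 := (comb t u v).1 - q.1; set w2 := (comb t u v).2 - q.2 => side0 det0 u0.
(* [comb t u v - q] is parallel both to [d] and to [u - q], which are independent *)
have e1 : w1 * (d.1 * (u.2 - q.2) - d.2 * (u.1 - q.1)) =
    (u.1 - q.1) * (d.1 * w2 - d.2 * w1) - d.1 * ((u.1 - q.1) * w2 - (u.2 - q.2) * w1) by ring.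
have e2 : w2 * (d.1 * (u.2 - q.2) - d.2 * (u.1 - q.1)) =
    (u.2 - q.2) * (d.1 * w2 - d.2 * w1) - d.2 * ((u.1 - q.1) * w2 - (u.2 - q.2) * w1) by ring.
rewrite side0 det0 !mulr0 subr0 in e1 e2.
move/eqP: e1; rewrite mulf_eq0 (negPf u0) orbF subr_eq0 => /eqP e1.
move/eqP: e2; rewrite mulf_eq0 (negPf u0) orbF subr_eq0 => /eqP e2.
exact: plane_ext.
Qed.

Lemma generic_direction q (r : seq (plane R)) : q \notin r ->
  exists d, forall x, x \in r -> side q d x != 0.
Proof.
move=> qr; pose slope x := `|(x.2 - q.2) / (x.1 - q.1)|.
have sum_ge0 (r' : seq (plane R)) : 0 <= \sum_(y <- r') slope y.
  by rewrite sumr_ge0 // => y _; exact: normr_ge0.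
have slope_le x (r' : seq (plane R)) : x \in r' -> slope x <= \sum_(y <- r') slope y.
  elim: r' => // y r' ih; rewrite in_cons big_cons => /orP[/eqP ->|/ih h].
    by rewrite lerDl sum_ge0.
  by apply: (le_trans h); rewrite lerDr normr_ge0.
pose m := 1 + \sum_(x <- r) slope x.
exists (1, - m) => x xr; rewrite /side /= mul1r mulNr opprK; apply/eqP => side0.
have [e|e] := eqVneq (x.1 - q.1) 0.
  move: qr; rewrite (_ : q = x) ?xr //; apply: plane_ext; move: side0; rewrite e mulr0; lra.
have : slope x = m.
  rewrite /slope (_ : _ / _ = - m) ?normrN ?ger0_norm //; last first.
    by apply: (mulIf e); rewrite divfK //; lra.
  by rewrite /m addr_ge0.
by move=> mx; have := slope_le x r xr; rewrite mx /m; lra.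
Qed.

Definition admissible q d u v := [/\ side q d u != 0, side q d v != 0 & ~ segment u v q].

Lemma admissibleC q d u v : admissible q d u v -> admissible q d v u.
Proof. by case=> u0 v0 quv; split; rewrite // segmentC. Qed.

Lemma crossing_triangle_admissible q d u v w :
  admissible q d u v -> admissible q d v w -> admissible q d w u ->
  crossing q d u v + crossing q d v w + crossing q d w u = wind q u v w.
Proof.
move=> [u0 v0 quv] [_ w0 qvw] [_ _ qwu].
by apply: crossing_triangle => //; apply: side_mul_gt0.
Qed.

(* Both sides are the total crossing number of the boundary of the hexagon
   [xy xw zx zw yz yw]: the inner edges cancel out. *)
Lemma wind_hexagon q d xy yz zx xw yw zw :
  admissible q d xy zx -> admissible q d zx yz -> admissible q d yz xy ->
  admissible q d xy xw -> admissible q d xw zx -> admissible q d zx zw ->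
  admissible q d zw yz -> admissible q d yz yw -> admissible q d yw xy ->
  admissible q d xw yw -> admissible q d zw xw -> admissible q d yw zw ->
  wind q xy zx yz + wind q xy xw zx + wind q zx zw yz + wind q yz yw xy =
  wind q xy xw yw + wind q xw zx zw + wind q zw yz yw + wind q xw zw yw.
Proof.
move=> g1 g2 g3 g4 g5 g6 g7 g8 g9 g10 g11 g12.
rewrite -(crossing_triangle_admissible g1 g2 g3).
rewrite -(crossing_triangle_admissible g4 g5 (admissibleC g1)).
rewrite -(crossing_triangle_admissible g6 g7 (admissibleC g2)).
rewrite -(crossing_triangle_admissible g8 g9 (admissibleC g3)).
rewrite -(crossing_triangle_admissible g4 g10 g9).
rewrite -(crossing_triangle_admissible g5 g6 g11).
rewrite -(crossing_triangle_admissible g7 g8 g12).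
rewrite -(crossing_triangle_admissible (admissibleC g11) (admissibleC g12) (admissibleC g10)).
rewrite (crossing_anti q d zx xy) (crossing_anti q d yz zx) (crossing_anti q d xy yz).
rewrite (crossing_anti q d zw xw) (crossing_anti q d yw zw) (crossing_anti q d yw xw).
lra.
Qed.

Lemma wind_values q u v w : [\/ wind q u v w = 0,
  wind q u v w = 1 /\ 0 < det3 u v w | wind q u v w = -1 /\ det3 u v w < 0].
Proof.
rewrite /wind /common_sign; have := det3_sum q u v w.
case: ifP => [/andP[/andP[h1 h2] h3]|_]; first by constructor 2; split => //; lra.
case: ifP => [/andP[/andP[h1 h2] h3]|_]; first by constructor 3; split => //; lra.
by constructor 1.
Qed.

Lemma wind_degenerate q u v w : det3 u v w = 0 -> wind q u v w = 0.
Proof. by move=> uvw0; case: (wind_values q u v w) => [|[_]|[_]] //; rewrite uvw0 ltxx. Qed.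

Lemma wind_opposite q u v w s : s = 1 \/ s = -1 -> s * det3 u v w < 0 ->
  wind q u v w = 0 \/ wind q u v w = - s.
Proof.
move=> hs neg; case: (wind_values q u v w) => [|[-> pos]|[-> pos]]; [by left | right..];
  by case: hs neg => ->; lra.
Qed.

Lemma wind_opposite_neq0 q u v w s : s = 1 \/ s = -1 -> s * det3 u v w < 0 ->
  wind q u v w != 0 -> wind q u v w = - s.
Proof. by move=> hs neg; case: (wind_opposite q hs neg) => ->; rewrite ?eqxx. Qed.

Lemma wind_all q u v w s : s = 1 \/ s = -1 ->
  0 < s * det3 q u v -> 0 < s * det3 q v w -> 0 < s * det3 q w u -> wind q u v w = s.
Proof.
rewrite /wind /common_sign; case=> -> h1 h2 h3; rewrite ?mul1r ?mulN1r ?oppr_gt0 in h1 h2 h3.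
  by rewrite h1 h2 h3.
by rewrite (lt_gtF h1) h1 h2 h3.
Qed.

Lemma wind_mixed q u v w : det3 q u v * det3 q v w < 0 -> wind q u v w = 0.
Proof.
move=> neg; rewrite /wind /common_sign.
case: ifP => [/andP[/andP[h1 h2] _]|_]; first by nra.
by case: ifP => [/andP[/andP[h1 h2] _]|_] //; nra.
Qed.

Lemma wind_signP q u v w : wind q u v w != 0 -> [/\ 0 < wind q u v w * det3 q u v,
  0 < wind q u v w * det3 q v w & 0 < wind q u v w * det3 q w u].
Proof.
rewrite /wind /common_sign.
case: ifP => [/andP[/andP[h1 h2] h3] _|_]; first by rewrite !mul1r.
case: ifP => [/andP[/andP[h1 h2] h3] _|_]; last by rewrite eqxx.
by rewrite !mulN1r !oppr_gt0.
Qed.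

Lemma wind_unit q u v w : wind q u v w != 0 -> wind q u v w = 1 \/ wind q u v w = -1.
Proof. by case: (wind_values q u v w) => [->|[-> _]|[-> _]]; rewrite ?eqxx //; [left | right]. Qed.

Lemma ratio01 (a b : R) : 0 <= a * b -> a + b != 0 -> 0 <= b / (a + b) <= 1.
Proof.
move=> ab ab0; have ab2 : 0 < (a + b) ^+ 2 by rewrite exprn_even_gt0.
rewrite (_ : b / (a + b) = b * (a + b) / (a + b) ^+ 2); last by field.
by rewrite divr_ge0 ?sqr_ge0 ?ler_pdivrMr //=; nra.
Qed.

Lemma wind_eq0_convex S q u v w : pconvex S -> S u -> S v -> S w -> ~ S q ->
  wind q u v w = 0.
Proof.
move=> cS Su Sv Sw; apply: contra_notP => /eqP w0.
have [pc pa pb] := wind_signP w0; move: (wind q u v w) (wind_unit w0) pc pa pb => s s1 pc pa pb.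
have [e1 e2] := det3_barycentric q u v w; rewrite -(det3_sum q) in e1 e2.
move: pa pb pc e1 e2; set a := det3 q v w; set b := det3 q w u; set c := det3 q u v.
move=> pa pb pc e1 e2.
have [bc bca] : 0 <= b * c /\ 0 <= (b + c) * a by case: s1 pa pb pc => -> pa pb pc; split; nra.
have [bc0 bca0 abc0] : [/\ b + c != 0, b + c + a != 0 & c + a + b != 0].
  by case: s1 pa pb pc => -> pa pb pc; split; apply/eqP; lra.
have /andP[t0 t1] := ratio01 bc bc0; have /andP[l0 l1] := ratio01 bca bca0.
(* [q] is the barycenter of [u], [v], [w] with the positive weights [a], [b], [c] *)
suff eq_q : q = comb (a / (b + c + a)) (comb (c / (b + c)) v w) u.
  by rewrite eq_q; apply: (cS) => //; apply: (cS).
by apply: plane_ext; apply: (mulfI abc0); rewrite ?e1 ?e2 /=; field; rewrite bc0 /=; lra.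
Qed.

Lemma admissible_in S q d u v : pconvex S -> S u -> S v -> ~ S q ->
  side q d u != 0 -> side q d v != 0 -> admissible q d u v.
Proof. by move=> cS Su Sv Sq u0 v0; split => // /(segment_sub cS Su Sv). Qed.

Lemma wind_hexagon_sets X Y Z q xy yz zx xw yw zw :
  pconvex X -> pconvex Y -> pconvex Z -> ~ X q -> ~ Y q -> ~ Z q ->
  (X `&` Y) xy -> (Y `&` Z) yz -> (Z `&` X) zx -> X xw -> Y yw -> Z zw ->
  ~ segment xw yw q -> ~ segment zw xw q -> ~ segment yw zw q ->
  wind q xy zx yz =
  wind q xy xw yw + wind q xw zx zw + wind q zw yz yw + wind q xw zw yw.
Proof.
move=> cX cY cZ Xq Yq Zq [Xxy Yxy] [Yyz Zyz] [Zzx Xzx] Xxw Yyw Zzw qxwyw qzwxw qywzw.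
have neq S x : S x -> ~ S q -> q != x by move=> Sx; apply: contra_notN => /eqP ->.
have [d dP] : exists d, forall x, x \in [:: xy; yz; zx; xw; yw; zw] -> side q d x != 0.
  apply: generic_direction; rewrite !inE !negb_or.
  by rewrite (neq _ _ Xxy) ?(neq _ _ Yyz) ?(neq _ _ Zzx) ?(neq _ _ Xxw) ?(neq _ _ Yyw) ?(neq _ _ Zzw).
have [s1 s2 s3] : [/\ side q d xy != 0, side q d yz != 0 & side q d zx != 0].
  by split; apply: dP; rewrite !inE eqxx ?orbT.
have [s4 s5 s6] : [/\ side q d xw != 0, side q d yw != 0 & side q d zw != 0].
  by split; apply: dP; rewrite !inE eqxx ?orbT.
have := wind_hexagon (admissible_in cX Xxy Xzx Xq s1 s3) (admissible_in cZ Zzx Zyz Zq s3 s2)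
  (admissible_in cY Yyz Yxy Yq s2 s1) (admissible_in cX Xxy Xxw Xq s1 s4)
  (admissible_in cX Xxw Xzx Xq s4 s3) (admissible_in cZ Zzx Zzw Zq s3 s6)
  (admissible_in cZ Zzw Zyz Zq s6 s2) (admissible_in cY Yyz Yyw Yq s2 s5)
  (admissible_in cY Yyw Yxy Yq s5 s1) (And3 s4 s5 qxwyw) (And3 s6 s4 qzwxw) (And3 s5 s6 qywzw).
rewrite (wind_eq0_convex cX Xxy Xxw Xzx Xq) (wind_eq0_convex cZ Zzx Zzw Zyz Zq).
rewrite (wind_eq0_convex cY Yyz Yyw Yxy Yq); lra.
Qed.

End WindingFacts.

Section Hollow.
Variable R : realType.
Implicit Types (s t : R) (q r u v w x y z : plane R) (K S X Y Z : set (plane R)).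

Definition halfplane s x y := [set r | 0 < s * det3 r x y].

Definition inner s x y z := halfplane s x y `&` halfplane s y z `&` halfplane s z x.

Lemma det3_continuous s x y : continuous (fun r => s * det3 r x y).
Proof.
move=> r; apply: cvgM; first exact: cvg_cst.
by apply: cvgB; apply: cvgM; apply: cvgB; by [exact: cvg_cst | exact: cvg_fst | exact: cvg_snd].
Qed.

Lemma open_halfplane s x y : open (halfplane s x y).
Proof.
rewrite (_ : halfplane s x y = (fun r => s * det3 r x y) @^-1` [set a | 0 < a]) //.
by apply: open_comp; [move=> r _; exact: det3_continuous | exact: open_gt].
Qed.

Lemma closed_det3_ge0 s x y : closed [set r | 0 <= s * det3 r x y].
Proof.
rewrite (_ : [set r | _] = (fun r => s * det3 r x y) @^-1` [set a | 0 <= a]) //.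
by apply: preimage_closed; [move=> r _; exact: det3_continuous | exact: closed_ge].
Qed.

Lemma barycenter_abs_le (a b c r x y z : R) : 0 < a -> 0 < b -> 0 < c ->
  (a + b + c) * r = a * x + b * y + c * z -> `|r| <= `|x| + `|y| + `|z|.
Proof.
move=> a0 b0 c0 e.
have abs_bounds (u : R) : - `|u| <= u <= `|u| by rewrite -ler_norml.
have /andP[nx px] := abs_bounds x; have /andP[ny py] := abs_bounds y.
have /andP[nz pz] := abs_bounds z.
rewrite ler_norml; apply/andP; split; nra.
Qed.

Lemma inner_bounded s x y z : pbounded (inner s x y z).
Proof.
exists (`|x.1| + `|y.1| + `|z.1| + (`|x.2| + `|y.2| + `|z.2|)) => r [[pc pa] pb].
have [e1 e2] := det3_barycentric r x y z.
have weights c1 c2 c3 c : det3 x y z * c = det3 r y z * c1 + det3 r z x * c2 + det3 r x y * c3 ->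
    `|c| <= `|c1| + `|c2| + `|c3|.
  rewrite -(det3_sum r x y z) => e; apply: (barycenter_abs_le pa pb pc).
  suff -> : (s * det3 r y z + s * det3 r z x + s * det3 r x y) * c =
    s * ((det3 r x y + det3 r y z + det3 r z x) * c) by rewrite e; ring.
  by ring.
have := normr_ge0 x.1; have := normr_ge0 y.1; have := normr_ge0 z.1.
have := normr_ge0 x.2; have := normr_ge0 y.2; have := normr_ge0 z.2.
by have := weights _ _ _ _ e1; have := weights _ _ _ _ e2; split; lra.
Qed.

Lemma boundary_segment s r x y z : s = 1 \/ s = -1 -> s * det3 r x y = 0 ->
  0 <= s * det3 r y z -> 0 <= s * det3 r z x -> 0 < s * det3 x y z -> segment x y r.
Proof.
move=> s1 pc pa pb pxyz; have rxy0 : det3 r x y = 0 by case: s1 pc => ->; lra.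
have [e1 e2] := det3_barycentric r x y z.
rewrite -(det3_sum r x y z) rxy0 add0r mul0r addr0 in e1 e2 pxyz.
move: pa pb pxyz e1 e2; set a := det3 r y z; set b := det3 r z x => pa pb pab e1 e2.
have [ab ab0] : 0 <= a * b /\ a + b != 0.
  by case: s1 pa pb pab => -> pa pb pab; (split; [nra | apply/eqP; lra]).
apply/segmentP; exists (b / (a + b)); first exact: ratio01.
by apply: plane_ext; apply: (mulfI ab0); rewrite ?e1 ?e2 /=; field.
Qed.

Lemma connected_sub_inner X Y Z s x y z K : pconvex X -> pconvex Y -> pconvex Z ->
  X x -> X y -> Y y -> Y z -> Z z -> Z x -> s = 1 \/ s = -1 ->
  connected K -> K `<=` ~` (X `|` Y `|` Z) -> K `&` inner s x y z !=set0 ->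
  K `<=` inner s x y z.
Proof.
move=> cX cY cZ Xx Xy Yy Yz Zz Zx s1 cK KO [r0 Kr0]; have [_ [[pc pa] pb]] := Kr0.
have pxyz : 0 < s * det3 x y z.
  by rewrite -(det3_sum r0 x y z) 2!mulrDr !addr_gt0.
have pyzx : 0 < s * det3 y z x by rewrite -det3_cycle.
have pzxy : 0 < s * det3 z x y by rewrite -2!det3_cycle.
pose F := [set r | 0 <= s * det3 r x y] `&` [set r | 0 <= s * det3 r y z] `&`
  [set r | 0 <= s * det3 r z x].
suff KU : K `&` inner s x y z = K by rewrite -KU => r [_].
apply: cK; first by exists r0.
  by exists (inner s x y z) => //; do 2?apply: openI; exact: open_halfplane.
exists F; first by do 2?apply: closedI; exact: closed_det3_ge0.
apply/seteqP; split => r [Kr rF]; split => //.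
  by case: rF => [[ha hb] hc]; split; [split|]; exact: ltW.
(* on [K], the closed triangle [F] is the open one: its edges lie in [X], [Y] and [Z] *)
case: rF => [[ha hb] hc]; rewrite /= in ha hb hc.
have edge S u v : pconvex S -> S u -> S v -> (S `<=` X `|` Y `|` Z) -> ~ segment u v r.
  by move=> cS Su Sv SO /(segment_sub cS Su Sv) /SO; exact: KO.
split; [split|]; rewrite /halfplane /= lt_def ?ha ?hb ?hc andbT; apply/eqP => h0.
- apply: (edge X x y cX Xx Xy); first by move=> ? ?; left; left.
  exact: boundary_segment h0 hb hc pxyz.
- apply: (edge Y y z cY Yy Yz); first by move=> ? ?; left; right.
  exact: boundary_segment h0 hc ha pyzx.
- apply: (edge Z z x cZ Zz Zx); first by move=> ? ?; right.
  exact: boundary_segment h0 ha hb pzxy.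
Qed.

End Hollow.

Section InConv.
Variable R : realType.
Implicit Types (s t : R) (q r u v w x y z : plane R) (A B C D S : set (plane R)).

Lemma wind_in_conv A B C D q ab ac bc ad bd cd s :
  pconvex A -> pconvex B -> pconvex C -> pconvex D ->
  (A `&` B) ab -> (C `&` A) ac -> (B `&` C) bc ->
  (A `&` D) ad -> (B `&` D) bd -> (C `&` D) cd ->
  ~ A q -> ~ B q -> ~ C q -> ~ D q -> s = 1 \/ s = -1 ->
  oriented A B D s -> oriented B C D s -> oriented C A D s ->
  wind q ab ad bd != 0 -> wind q ab ac bc != 0.
Proof.
move=> cA cB cC cD ABab CAac BCbc ADad BDbd CDcd Aq Bq Cq Dq s1 oABD oBCD oCAD wABD.
have [Aad Dad] := ADad; have [Bbd Dbd] := BDbd; have [Ccd Dcd] := CDcd.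
have Dseg u v : D u -> D v -> ~ segment u v q by move=> Du Dv /(segment_sub cD Du Dv).
rewrite (wind_hexagon_sets cA cB cC Aq Bq Cq ABab BCbc CAac Aad Bbd Ccd
  (Dseg _ _ Dad Dbd) (Dseg _ _ Dcd Dad) (Dseg _ _ Dbd Dcd)).
rewrite (wind_eq0_convex cD Dad Dcd Dbd Dq) addr0.
have h1 : s * det3 ab ad bd < 0.
  by rewrite (det3_cycle ab) (det3_cycle ad) det3_swap mulrN oppr_lt0; exact: oABD.
have h2 : s * det3 ad ac cd < 0 by rewrite det3_swap mulrN oppr_lt0; exact: oCAD.
have h3 : s * det3 cd bc bd < 0 by rewrite det3_swap mulrN oppr_lt0; exact: oBCD.
rewrite (wind_opposite_neq0 s1 h1 wABD).
by case: (wind_opposite q s1 h2) => ->; case: (wind_opposite q s1 h3) => ->;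
  case: s1 => ->; apply/eqP; lra.
Qed.

End InConv.

Section Perturbation.
Variable R : realType.
Implicit Types (s t : R) (a b p q r u v w x y z : plane R) (D E S V : set (plane R)).

Lemma near_comb V x y : open V -> V x -> \forall e \near 0^'+, V (comb e x y).
Proof.
move=> oV Vx; have /nbhs_ballP [r r0 rV] : nbhs x V by apply: open_nbhs_nbhs.
pose k := `|y.1 - x.1| + `|y.2 - x.2| + 1.
have k0 : 0 < k by rewrite ltr_wpDl // addr_ge0.
near=> e; apply: rV.
have e0 : 0 < e by near: e; exact: nbhs_right_gt.
have ek : e < r / k by near: e; apply: nbhs_right_lt; rewrite divr_gt0.
have small c : `|c| <= k -> `|e * c| < r.
  move=> ck; rewrite normrM gtr0_norm //.
  by apply: (le_lt_trans (ler_wpM2l (ltW e0) ck)); rewrite -ltr_pdivlMr.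
have -> : comb e x y = (x.1 + e * (y.1 - x.1), x.2 + e * (y.2 - x.2)).
  by apply: plane_ext; rewrite /=; ring.
split; rewrite /ball /= distrC addrC addKr; apply: small.
  by have := normr_ge0 (y.2 - x.2); rewrite /k; lra.
by have := normr_ge0 (y.1 - x.1); rewrite /k; lra.
Unshelve. all: by end_near.
Qed.

Lemma near0_exists (P : R -> Prop) : (\forall e \near 0^'+, P e) -> exists e, 0 < e < 1 /\ P e.
Proof.
move=> nP; have : \forall e \near 0^'+, [/\ 0 < e, e < 1 & P e].
  by near=> e; split; near: e; [exact: nbhs_right_gt | exact: nbhs_right_lt | exact: nP].
by case/filter_ex => e [e0 e1 Pe]; exists e; rewrite e0 e1.
Unshelve. all: by end_near.
Qed.

Lemma segment_ball p q e : ball p e q -> segment q p `<=` ball p e.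
Proof.
rewrite /ball /= => -[q1 q2] r /segmentP [l /andP[l0 l1] ->].
have shrink (a b : R) : `|a - b| < e -> `|a - ((1 - l) * b + l * a)| < e.
  move=> ab; rewrite (_ : _ - _ = (1 - l) * (a - b)); last by ring.
  rewrite normrM ger0_norm ?subr_ge0 //; have := normr_ge0 (a - b); nra.
by split; apply: shrink.
Qed.

Lemma comb_comb t l p a : comb t (comb l p a) a = comb (l + t * (1 - l)) p a.
Proof. by apply: plane_ext; rewrite /=; ring. Qed.

Lemma exit_point D E p0 a : closed D -> pconvex E -> D p0 -> E p0 -> ~ D a -> E a ->
  exists2 p, (D `&` E) p /\ segment p0 a p & forall t, 0 < t <= 1 -> ~ D (comb t p a).
Proof.
move=> clD cE Dp0 Ep0 Da Ea.
pose T := `[0, 1] `&` (fun t => comb t p0 a) @^-1` D.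
have T0 : T 0 by split; [rewrite /= in_itv /= lexx ler01 | rewrite /= comb0].
have T_le1 : forall t, T t -> t <= 1 by move=> t [+ _]; rewrite /= in_itv => /andP[].
have clT : closed T.
  by apply: closedI; [exact: itv_closed | apply: preimage_closed => // t _; exact: comb_continuous].
have [m01 Dm] : T (sup T).
  by rewrite {1}(closure_id T).1 //; apply: closure_sup; [exists 0 | exists 1].
have /andP[m0 m1] : 0 <= sup T <= 1 by move: m01; rewrite /= in_itv.
exists (comb (sup T) p0 a).
  split; first by split => //; apply: cE.
  by apply/segmentP; exists (sup T) => //; rewrite m0.
move=> t /andP[t0 t1]; rewrite comb_comb => Dt.
have m_lt1 : sup T < 1.
  by rewrite lt_neqAle m1 andbT; apply: contra_notN Da => /eqP m_eq1; rewrite -(comb1 p0 a) -m_eq1.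
have : T (sup T + t * (1 - sup T)).
  by split => //; rewrite /= in_itv /=; apply/andP; split; nra.
move/(sup_upper_bound (conj (ex_intro _ 0 T0) (ex_intro _ 1 T_le1))); nra.
Qed.

Lemma det3_collinear x y z w : x != y -> det3 x y z = 0 -> det3 x y w = 0 -> det3 x z w = 0.
Proof.
move=> xy xyz0 xyw0; have [e|e] := eqVneq (y.1 - x.1) 0.
  have e' : y.2 - x.2 != 0 by apply: contra xy => /eqP e'; apply/eqP/plane_ext; lra.
  apply: (mulIf e'); rewrite mul0r.
  rewrite (_ : _ * _ = det3 x y w * (z.2 - x.2) - det3 x y z * (w.2 - x.2)); last first.
    by rewrite /det3; ring.
  by rewrite xyz0 xyw0; ring.
apply: (mulIf e); rewrite mul0r.
rewrite (_ : _ * _ = det3 x y w * (z.1 - x.1) - det3 x y z * (w.1 - x.1)); last first.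
  by rewrite /det3; ring.
by rewrite xyz0 xyw0; ring.
Qed.

(* If [x] lies in the angle at [p] spanned by [a] and [b] but outside the convex set
   [E] containing the triangle [p a b], then [px] crosses [ab]. *)
Lemma cone_segment_meet D E p a b x : pconvex D -> pconvex E -> D p -> D x ->
  E p -> E a -> E b -> ~ E x -> det3 p a b != 0 ->
  0 <= det3 p x b * det3 p a b -> 0 <= det3 p a x * det3 p a b ->
  exists2 r, D r & segment a b r.
Proof.
move=> cD cE Dp Dx Ep Ea Eb Ex c0 gx lx.
pose g := det3 p x b / det3 p a b; pose l := det3 p a x / det3 p a b.
have c2 : 0 < det3 p a b ^+ 2 by rewrite exprn_even_gt0.
have g0 : 0 <= g.
  rewrite (_ : g = det3 p x b * det3 p a b / det3 p a b ^+ 2); last by rewrite /g; field.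
  exact: divr_ge0 gx (ltW c2).
have l0 : 0 <= l.
  rewrite (_ : l = det3 p a x * det3 p a b / det3 p a b ^+ 2); last by rewrite /l; field.
  exact: divr_ge0 lx (ltW c2).
(* Cramer's rule: [x - p = g (a - p) + l (b - p)] *)
have [x1 x2] : x.1 = p.1 + g * (a.1 - p.1) + l * (b.1 - p.1) /\
    x.2 = p.2 + g * (a.2 - p.2) + l * (b.2 - p.2).
  have e1 : det3 p a b * (x.1 - p.1) = det3 p x b * (a.1 - p.1) + det3 p a x * (b.1 - p.1).
    by rewrite /det3; ring.
  have e2 : det3 p a b * (x.2 - p.2) = det3 p x b * (a.2 - p.2) + det3 p a x * (b.2 - p.2).
    by rewrite /det3; ring.
  split.
    rewrite {1}(_ : x.1 = p.1 + det3 p a b * (x.1 - p.1) / det3 p a b); last by field.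
    by rewrite e1 /g /l; field.
  rewrite {1}(_ : x.2 = p.2 + det3 p a b * (x.2 - p.2) / det3 p a b); last by field.
  by rewrite e2 /g /l; field.
clearbody g l.
have gl0 : 0 < g + l.
  rewrite lt_def addr_ge0 // andbT; apply: contra_notN Ex => /eqP gl0.
  have [g_0 l_0] : g = 0 /\ l = 0 by lra.
  by rewrite (_ : x = p) //; apply: plane_ext; rewrite ?x1 ?x2 g_0 l_0; ring.
pose m := comb (l / (g + l)) a b.
have m_seg : segment a b m.
  apply/segmentP; exists (l / (g + l)) => //.
  by rewrite divr_ge0 ?ler_pdivrMr //=; lra.
have x_pm : x = comb (g + l) p m by apply: plane_ext; rewrite /= ?x1 ?x2; field; lra.
have [gl1|gl1] := lerP (g + l) 1.
  case: Ex; rewrite x_pm; apply: (cE) => //; [exact: (segment_sub cE Ea Eb m_seg) | exact: ltW].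
exists m => //; rewrite (_ : m = comb (1 / (g + l)) p x).
  by apply: cD => //; rewrite ?divr_ge0 ?ler_pdivrMr //; lra.
by rewrite x_pm; apply: plane_ext; rewrite /=; field; lra.
Qed.

End Perturbation.

Section NearExit.
Variable R : realType.
Implicit Types (t e : R) (q x : plane R).
Variables (A B C D : set (plane R)) (ab ad bd ae be p : plane R) (s : R).
Hypotheses (cA : pconvex A) (cB : pconvex B) (cD : pconvex D).
Hypotheses (clA : closed A) (clB : closed B) (clC : closed C) (clD : closed D).
Hypotheses (ABab : (A `&` B) ab) (DAad : (D `&` A) ad) (BDbd : (B `&` D) bd).
Hypotheses (Aae : A ae) (Bbe : B be) (Dp : D p) (Ap : ~ A p) (Bp : ~ B p) (Cp : ~ C p).
Hypothesis s1 : s = 1 \/ s = -1.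
Hypotheses (s_ae_p_ad : 0 < s * det3 ae p ad) (s_p_be_bd : 0 < s * det3 p be bd).
Hypothesis s_be_ae_ab : 0 < s * det3 be ae ab.
Hypothesis exit : forall t, 0 < t <= 1 -> ~ D (comb t p ae).

Lemma wind_ABD q : ~ A q -> ~ B q -> ~ D q -> ~ segment ae be q -> ~ segment be p q ->
  wind q ae ad p = - s -> wind q ae p be = 0 \/ wind q ae p be = s /\ wind q p bd be = - s ->
  wind q ab ad bd != 0.
Proof.
move=> Aq Bq Dq q_aebe q_bep w1 w23.
have q_pae : ~ segment p ae q.
  have /wind_signP[_ _] : wind q ae ad p != 0 by rewrite w1 oppr_eq0; case: s1 => ->.
  by rewrite w1 => + /det3_segment h0; rewrite h0 mulr0 ltxx.
rewrite (wind_hexagon_sets cA cB cD Aq Bq Dq ABab BDbd DAad Aae Bbe Dp q_aebe q_pae q_bep) w1.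
have h1 : s * det3 ab ae be < 0.
  by rewrite (det3_cycle ab) (det3_cycle ae) det3_swap mulrN oppr_lt0.
have h2 : s * det3 p bd be < 0 by rewrite det3_swap mulrN oppr_lt0.
case: (wind_opposite q s1 h1) => ->; case: w23 => [->|[-> ->]];
  try case: (wind_opposite q s1 h2) => ->; by case: s1 => ->; apply/eqP; lra.
Qed.

Let perturb t e := comb e (comb t p ae) ad.

Lemma det3_perturb_p_ae t e : det3 (perturb t e) p ae = e * det3 ad p ae.
Proof. by rewrite /perturb !det3_combl /det3; ring. Qed.

Lemma exists_perturb W Dir : open W -> W p -> open Dir ->
  (forall t, 0 < t <= 1 -> Dir (comb t p ae)) ->
  exists t e, [/\ 0 < t, 0 < e, W (perturb t e), Dir (perturb t e) &
    [/\ ~ D (perturb t e), segment (perturb t e) p `<=` ~` (A `|` B `|` C)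
      & wind (perturb t e) ae ad p = - s]].
Proof.
move=> oW Wp oDir Dir_exit.
have [r r0 ball_out] : exists2 r, 0 < r & ball p r `<=` ~` (A `|` B `|` C).
  apply/nbhs_ballP; apply: open_nbhs_nbhs; split; last by case=> [[]|].
  by apply: closed_openC; do 2?apply: closedU.
pose W' := W `&` ball p r `&` halfplane (- s) ae ad.
pose Dir' := Dir `&` halfplane (- s) ad p.
have oW' : open W' by do 2?apply: openI => //; [exact: ball_open | exact: open_halfplane].
have oDir' : open Dir' by apply: openI => //; exact: open_halfplane.
have W'p : W' p.
  split; [split => //; exact: ballxx | rewrite /halfplane /=].
  by rewrite (_ : - s * det3 p ae ad = s * det3 ae p ad) // /det3; ring.
have [t [/andP[t0 t1] W't]] := near0_exists (near_comb ae oW' W'p).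
pose V := W' `&` ~` D `&` Dir'.
have oV : open V by do 2?apply: openI => //; exact: closed_openC.
have Vt : V (comb t p ae).
  split; [split => //; apply: exit; by rewrite t0 (ltW t1) |].
  split; first by apply: Dir_exit; rewrite t0 (ltW t1).
  rewrite /halfplane /= (_ : - s * det3 (comb t p ae) ad p = t * (s * det3 ae p ad)).
    exact: mulr_gt0.
  by rewrite det3_combl /det3; ring.
have [e [/andP[e0 e1] [[[[Wq ballq] hq] Dq] [Dirq hq']]]] := near0_exists (near_comb ad oV Vt).
exists t, e; split => //; split => //.
  by apply: subset_trans ball_out; exact: segment_ball.
have s1' : - s = 1 \/ - s = -1 by case: s1 => ->; [right | left; rewrite opprK].
apply: wind_all => //; rewrite -/(perturb t e) det3_perturb_p_ae.
rewrite (_ : - s * (e * det3 ad p ae) = e * (s * det3 ae p ad)); first exact: mulr_gt0.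
by rewrite /det3; ring.
Qed.

Lemma segment_avoid_l q : segment q p `<=` ~` (A `|` B `|` C) -> ~ A q /\ ~ B q.
Proof. by move=> /(_ q (segment_l q p)) qO; split => ?; apply: qO; left; [left | right]. Qed.

Lemma near_exit_collinear : det3 p ae be = 0 -> p != be -> ae != be ->
  exists q, [/\ ~ D q, segment q p `<=` ~` (A `|` B `|` C) & wind q ab ad bd != 0].
Proof.
move=> c0 pbe aebe.
have [t [e [t0 e0 _ _ [Dq segq w1]]]] := exists_perturb openT I openT (fun _ _ => I).
exists (perturb t e); split => //; have [Aq Bq] := segment_avoid_l segq.
have e1 : det3 (perturb t e) ae be = e * det3 ad ae be.
  by rewrite /perturb !det3_combl c0 /det3; ring.
have e2 : det3 (perturb t e) be p = e * det3 ad be p.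
  by rewrite /perturb !det3_combl -(det3_cycle p ae be) c0 /det3; ring.
have ae_p_ad : det3 ae p ad != 0 by apply: contraTneq s_ae_p_ad => ->; rewrite mulr0 ltxx.
have n1 : det3 ad ae be != 0.
  apply: contra ae_p_ad => /eqP h; apply/eqP; apply: (det3_collinear aebe).
    by rewrite -(det3_cycle p ae be).
  by rewrite -(det3_cycle ad ae be).
have n3 : det3 ad be p != 0.
  apply: contra ae_p_ad => /eqP h; apply/eqP.
  have := det3_collinear (z := ae) (w := ad) pbe; rewrite /det3 in c0 h *; lra.
apply: wind_ABD => //.
- by move/det3_segment/eqP; rewrite e1 mulf_eq0 (gt_eqF e0) (negPf n1).
- by move/det3_segment/eqP; rewrite e2 mulf_eq0 (gt_eqF e0) (negPf n3).
- by left; apply: wind_degenerate; rewrite det3_swap -(det3_cycle p ae be) c0 oppr0.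
Qed.

Lemma det3_comb_p_ae t x : det3 (comb t p ae) x p = t * det3 ae x p.
Proof. by rewrite det3_combl /det3; ring. Qed.

Lemma near_exit_opposite : 0 < s * det3 p ae be ->
  exists q, [/\ ~ D q, segment q p `<=` ~` (A `|` B `|` C) & wind q ab ad bd != 0].
Proof.
move=> sc.
have Dir_exit t : 0 < t <= 1 -> halfplane s be p (comb t p ae).
  case/andP=> t0 _; rewrite /halfplane /= det3_comb_p_ae mulrCA mulr_gt0 //.
  by rewrite -(det3_cycle p ae be).
have [t [e [t0 e0 Wq Dirq [Dq segq w1]]]] :=
  exists_perturb (@open_halfplane _ s ae be) sc (@open_halfplane _ s be p) Dir_exit.
exists (perturb t e); split => //; have [Aq Bq] := segment_avoid_l segq.
rewrite /halfplane /= in Wq Dirq.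
apply: wind_ABD => //.
- by move/det3_segment => h0; move: Wq; rewrite h0 mulr0 ltxx.
- by move/det3_segment => h0; move: Dirq; rewrite h0 mulr0 ltxx.
- left; apply: wind_mixed.
  have /wind_signP[_ _] : wind (perturb t e) ae ad p != 0 by rewrite w1 oppr_eq0; case: s1 => ->.
  rewrite w1 (det3_swap _ p ae) (det3_swap _ be p).
  by case: s1 Dirq => -> Dirq sq; nra.
Qed.

Lemma near_exit_same_side : s * det3 p ae be < 0 -> 0 < s * det3 p ae bd ->
  exists q, [/\ ~ D q, segment q p `<=` ~` (A `|` B `|` C) & wind q ab ad bd != 0].
Proof.
move=> sc se.
have Wp : (halfplane (- s) ae be `&` halfplane (- s) bd be) p.
  by split; rewrite /halfplane /= mulNr oppr_gt0 // det3_swap mulrN oppr_lt0.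
have Dir_exit t : 0 < t <= 1 -> (halfplane (- s) be p `&` halfplane (- s) p bd) (comb t p ae).
  case/andP=> t0 _; split; rewrite /halfplane /=.
    by rewrite det3_comb_p_ae mulrCA mulr_gt0 // -(det3_cycle p ae be) mulNr oppr_gt0.
  rewrite (_ : - s * det3 (comb t p ae) p bd = t * (s * det3 p ae bd)); first exact: mulr_gt0.
  by rewrite det3_combl /det3; ring.
have [t [e [t0 e0 [Wq1 Wq2] [Dirq1 Dirq2] [Dq segq w1]]]] :=
  exists_perturb (openI (@open_halfplane _ (- s) ae be) (@open_halfplane _ (- s) bd be)) Wp
    (openI (@open_halfplane _ (- s) be p) (@open_halfplane _ (- s) p bd)) Dir_exit.
exists (perturb t e); split => //; have [Aq Bq] := segment_avoid_l segq.
rewrite /halfplane /= in Wq1 Wq2 Dirq1 Dirq2.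
have s1' : - s = 1 \/ - s = -1 by case: s1 => ->; [right | left; rewrite opprK].
apply: wind_ABD => //.
- by move/det3_segment => h0; move: Wq1; rewrite h0 mulr0 ltxx.
- by move/det3_segment => h0; move: Dirq1; rewrite h0 mulr0 ltxx.
- right; split; last exact: wind_all.
  have /wind_signP[_ _] : wind (perturb t e) ae ad p != 0 by rewrite w1 oppr_eq0; case: s1 => ->.
  rewrite w1 => ae_p; apply: wind_all => //.
  + by rewrite det3_swap mulrN -mulNr.
  + by rewrite det3_swap mulrN -mulNr.
  + by rewrite det3_swap mulrN -mulNr.
Qed.

End NearExit.

Section NearMeet.
Variable R : realType.
Implicit Types (s t : R) (p q r : plane R) (A B C D E : set (plane R)).

Lemma exists_inside_near_meet A B C D E ab ad bd ae be p0 s :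
  pconvex A -> pconvex B -> pconvex D -> pconvex E ->
  closed A -> closed B -> closed C -> closed D ->
  (A `&` B) ab -> (A `&` D) ad -> (B `&` D) bd -> (A `&` E) ae -> (B `&` E) be -> (D `&` E) p0 ->
  D `&` A `&` E = set0 -> B `&` D `&` E = set0 -> C `&` D `&` E = set0 -> A `&` B `&` E = set0 ->
  s = 1 \/ s = -1 -> oriented A B E s -> oriented B D E s -> oriented D A E s ->
  exists p q, [/\ (D `&` E) p, ~ D q, segment q p `<=` ~` (A `|` B `|` C)
    & wind q ab ad bd != 0].
Proof.
move=> cA cB cD cE clA clB clC clD ABab ADad BDbd [Aae Eae] [Bbe Ebe] [Dp0 Ep0].
move=> /meet3_emptyP DAE /meet3_emptyP BDE /meet3_emptyP CDE /meet3_emptyP ABE s1 oABE oBDE oDAE.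
have DAad : (D `&` A) ad by rewrite setIC.
have near_exit p : (D `&` E) p -> (forall t, 0 < t <= 1 -> ~ D (comb t p ae)) ->
    [\/ det3 p ae be = 0, 0 < s * det3 p ae be | s * det3 p ae be < 0 /\ 0 < s * det3 p ae bd] ->
    exists p q, [/\ (D `&` E) p, ~ D q, segment q p `<=` ~` (A `|` B `|` C)
      & wind q ab ad bd != 0].
  move=> [Dp Ep] exit cases.
  have Ap : ~ A p by move=> h; exact: DAE Dp h Ep.
  have Bp : ~ B p by move=> h; exact: BDE h Dp Ep.
  have Cp : ~ C p by move=> h; exact: CDE h Dp Ep.
  have o1 := oDAE ae p ad (And3 (conj Aae Eae) (conj Dp Ep) DAad).
  have o2 := oBDE p be bd (And3 (conj Dp Ep) (conj Bbe Ebe) BDbd).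
  have o3 := oABE be ae ab (And3 (conj Bbe Ebe) (conj Aae Eae) ABab).
  suff [q [Dq segq w]] : exists q,
      [/\ ~ D q, segment q p `<=` ~` (A `|` B `|` C) & wind q ab ad bd != 0].
    by exists p, q.
  case: cases => [c0 | sc | [sc se]].
  - have pbe : p != be by apply/eqP => e; apply: Bp; rewrite e.
    have aebe : ae != be by apply/eqP => e; apply: (ABE ae) => //; rewrite e.
    exact: (near_exit_collinear (ae := ae) (be := be) (s := s)).
  - exact: (near_exit_opposite (ae := ae) (be := be) (s := s)).
  - exact: (near_exit_same_side (ae := ae) (be := be) (s := s)).
have Dae : ~ D ae by move=> h; exact: DAE h Aae Eae.
have Ebd : ~ E bd by case: BDbd => Bbd Dbd h; exact: BDE Bbd Dbd h.
have [p [DEp _] exit] := exit_point clD cE Dp0 Ep0 Dae Eae.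
have [c0|c0] := eqVneq (det3 p ae be) 0; first by apply: (near_exit p) => //; constructor 1.
have [sc|sc] := ltrP 0 (s * det3 p ae be); first by apply: (near_exit p) => //; constructor 2.
have {}sc : s * det3 p ae be < 0.
  by rewrite lt_neqAle sc andbT mulf_neq0 //; case: s1 => ->; rewrite ?oppr_eq0 oner_eq0.
have [se|se] := ltrP 0 (s * det3 p ae bd); first by apply: (near_exit p) => //; constructor 3.
have [[Dp Ep] [_ Dbd]] := (DEp, BDbd).
have o2 := oBDE p be bd (And3 DEp (conj Bbe Ebe) BDbd).
(* [bd] lies in the angle at [p] spanned by [ae] and [be], hence [p bd] meets [ae be] *)
have [r Dr r_seg] : exists2 r, D r & segment ae be r.
  apply: (cone_segment_meet cD cE Dp Dbd Ep Eae Ebe Ebd c0);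
    by rewrite ?(det3_swap p be bd); case: s1 sc se o2 => -> sc se o2; nra.
have [p' [DEp' p'_seg] exit'] := exit_point clD cE Dr (segment_sub cE Eae Ebe r_seg) Dae Eae.
apply: (near_exit p') => //; constructor 1.
case/segmentP: p'_seg => l _ ->.
by rewrite det3_combl (det3_segment r_seg) /det3; ring.
Qed.
End NearMeet.

Section HoleyList.
Variables (R : realType) (n : nat) (F : seq (set (plane R))).
Hypothesis hF : holey (fun k : 'I_n => nth set0 F k).

Lemma holey_nth_meet i j : (i < n)%N -> (j < n)%N -> nth set0 F i `&` nth set0 F j !=set0.
Proof. by move=> ilt jlt; exact: hF.1 (Ordinal ilt) (Ordinal jlt). Qed.

Lemma holey_nth_meet3 i j k : (i < n)%N -> (j < n)%N -> (k < n)%N ->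
  i != j -> j != k -> i != k -> nth set0 F i `&` nth set0 F j `&` nth set0 F k = set0.
Proof.
move=> ilt jlt klt ij jk ik.
have neq a b (alt : (a < n)%N) (blt : (b < n)%N) : a != b -> Ordinal alt <> Ordinal blt.
  by move=> ab /(congr1 val) /eqP; exact/negP.
exact: hF.2 (neq _ _ _ _ ij) (neq _ _ _ _ jk) (neq _ _ _ _ ik).
Qed.

End HoleyList.

Section Claim.
Variables (R : realType) (A B C D E : set (plane R)).
Hypotheses (cA : pconvex A) (cB : pconvex B) (cC : pconvex C) (cD : pconvex D) (cE : pconvex E).
Hypotheses (clA : closed A) (clB : closed B) (clC : closed C) (clD : closed D).
Hypothesis hF : holey (fun i : 'I_5 => nth set0 [:: A; B; C; D; E] i).

Let meet := @holey_nth_meet R 5 _ hF.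
Let empty := @holey_nth_meet3 R 5 _ hF.

Lemma D_meet_E_outside p : (D `&` E) p -> ~ (A `|` B `|` C) p.
Proof.
case=> Dp Ep [[Ap|Bp]|Cp].
- exact: (meet3_emptyP (@empty 0 3 4 isT isT isT isT isT isT)%N) Ap Dp Ep.
- exact: (meet3_emptyP (@empty 1 3 4 isT isT isT isT isT isT)%N) Bp Dp Ep.
- exact: (meet3_emptyP (@empty 2 3 4 isT isT isT isT isT isT)%N) Cp Dp Ep.
Qed.

Lemma exists_wind_ABC p0 : in_conv D A B C -> in_conv E A B D -> (D `&` E) p0 ->
  exists ab ac bc p q, [/\ (A `&` B) ab, (C `&` A) ac, (B `&` C) bc, (D `&` E) p &
    segment q p `<=` ~` (A `|` B `|` C) /\ wind q ab ac bc != 0].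
Proof.
move=> inD inE DEp0.
have /= [ab ABab] := (@meet 0 1 isT isT)%N; have /= [ac CAac] := (@meet 2 0 isT isT)%N.
have /= [bc BCbc] := (@meet 1 2 isT isT)%N; have /= [ad ADad] := (@meet 0 3 isT isT)%N.
have /= [bd BDbd] := (@meet 1 3 isT isT)%N; have /= [cd CDcd] := (@meet 2 3 isT isT)%N.
have /= [ae AEae] := (@meet 0 4 isT isT)%N; have /= [be BEbe] := (@meet 1 4 isT isT)%N.
have [sD sD1 [oABD oBCD oCAD]] := in_conv_oriented cD cA cB cC
  (@empty 0 1 3 isT isT isT isT isT isT)%N (@empty 1 2 3 isT isT isT isT isT isT)%N
  (@empty 2 0 3 isT isT isT isT isT isT)%N inD.
have [sE sE1 [oABE oBDE oDAE]] := in_conv_oriented cE cA cB cD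
  (@empty 0 1 4 isT isT isT isT isT isT)%N (@empty 1 3 4 isT isT isT isT isT isT)%N
  (@empty 3 0 4 isT isT isT isT isT isT)%N inE.
have [p [q [DEp Dq segq wABD]]] := exists_inside_near_meet cA cB cD cE clA clB clC clD
  ABab ADad BDbd AEae BEbe DEp0 (@empty 3 0 4 isT isT isT isT isT isT)%N
  (@empty 1 3 4 isT isT isT isT isT isT)%N (@empty 2 3 4 isT isT isT isT isT isT)%N
  (@empty 0 1 4 isT isT isT isT isT isT)%N sE1 oABE oBDE oDAE.
have /= qO := segq q (segment_l q p).
exists ab, ac, bc, p, q; split => //; split => //.
apply: (wind_in_conv cA cB cC cD ABab CAac BCbc ADad BDbd CDcd _ _ _ Dq sD1 oABD oBCD oCAD wABD);
  move=> h; apply: qO; [by left; left | by left; right | by right].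
Qed.

Lemma D_meet_E_sub_hollow : in_conv D A B C -> in_conv E A B D -> D `&` E `<=` hollow A B C.
Proof.
move=> inD inE p0 DEp0; split; first exact: D_meet_E_outside.
have [ab [ac [bc [p [q [[Aab Bab] [Cac Aac] [Bbc Cbc] DEp [segq wq]]]]]]] :=
  exists_wind_ABC inD inE DEp0.
set O := ~` (A `|` B `|` C); set K := connected_component O p0.
have qK : K q.
  suff : segment q p `|` (D `&` E) `<=` K by apply; left; exact: segment_l.
  apply: connected_component_max; first by right.
    by rewrite subUset; split => // r /D_meet_E_outside.
  apply: connectedU; first by exists p; split; [exact: segment_r | ].
    exact: connected_segment.
  exact: pconvex_connected (pconvexI cD cE).
have KO : K `<=` ~` (A `|` C `|` B) by rewrite setUAC; exact: connected_component_sub.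
have K_inner : K `<=` inner (wind q ab ac bc) ab ac bc.
  apply: (connected_sub_inner cA cC cB Aab Aac Cac Cbc Bbc Bab (wind_unit wq)
    (@component_connected _ O p0) KO).
  by exists q; split => //; have [] := wind_signP wq.
have [M inner_M] := @inner_bounded _ (wind q ab ac bc) ab ac bc.
by exists M => r /K_inner /inner_M.
Qed.

End Claim.

Theorem claim2 (R : realType) (A B C D E : set (plane R)) :
  cconvex A -> cconvex B -> cconvex C -> cconvex D -> cconvex E ->
  holey (fun i : 'I_5 => nth set0 [:: A; B; C; D; E] i) ->
  in_conv D A B C -> in_conv E A B D ->
  D `&` E `<=` hollow A B C.
Proof.
move=> [kA cA] [kB cB] [kC cC] [kD cD] [_ cE].
have closed_of (S : set (plane R)) : compact S -> closed S by move=> kS; apply: compact_closed.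
exact: D_meet_E_sub_hollow (closed_of _ kA) (closed_of _ kB) (closed_of _ kC) (closed_of _ kD).
Qed.
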